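(* There are universal constants $\beta,\kappa>1$ such that the following holds. Let $k\ge1$, $0<\gamma,\epsilon<1/2$, $r=\beta\cdot(1/\gamma)\cdot\log(k/\epsilon)$, and let $S_1,\dots,S_\ell\subseteq[n]$ be an $r$-spread sequence of $\ell=\lceil r^k\rceil$ sets, each of size $k$. Let $X$ be uniformly random in $[\ell]$. Then for every integer $m$ with $0\le m\le r\gamma/\kappa$ and every integer $s$ with $\kappa m n/r\le s\le n$, if $W$ is a uniformly random subset of $[n]$ of size $s$ independent of $X$, then $\mathbb{E}[|\chi(X,W)|]\le k\cdot(2/3)^m$.
   Context: A sequence (repetitions allowed) of sets $S_1,\dots,S_\ell\subseteq[n]$, each of size $k$, is called $r$-spread if for every non-empty set $Z\subseteq[n]$, the number of indices $i\in[\ell]$ with $Z\subseteq S_i$ is at most $r^{k-|Z|}$. For $x\in[\ell]$ and $W\subseteq[n]$, $\chi(x,W)$ denotes $S_y\setminus W$, where $y\in[\ell]$ is chosen to minimize $|S_y\setminus W|$ among all $y$ with $S_y\subseteq S_x\cup W$, ties broken by taking the smallest such $y$. All logarithms are base $2$. *)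

From mathcomp Require Import all_boot.
From Stdlib Require Import Reals ZArith.

Set Implicit Arguments.
Unset Strict Implicit.
Unset Printing Implicit Defensive.

Definition log2 (x : R) : R := (ln x / ln 2)%R.

Definition spread (n l k : nat) (r : R) (S : 'I_l -> {set 'I_n}) : Prop :=
  forall Z : {set 'I_n}, Z != set0 ->
    (INR #|[set i : 'I_l | Z \subset S i]| <=
       powerRZ r (Z.of_nat k - Z.of_nat #|Z|)%Z)%R.

Definition chi_adm (n l : nat) (S : 'I_l -> {set 'I_n}) (x : 'I_l)
  (W : {set 'I_n}) (y : 'I_l) : bool := S y \subset S x :|: W.

Definition chi_opt (n l : nat) (S : 'I_l -> {set 'I_n}) (x : 'I_l)
  (W : {set 'I_n}) (y : 'I_l) : bool :=
  chi_adm S x W y &&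
  [forall z : 'I_l, chi_adm S x W z ==> (#|S y :\: W| <= #|S z :\: W|)].

(* the smallest optimal index (exists since x itself is admissible) *)
Definition chi_idx (n l : nat) (S : 'I_l -> {set 'I_n}) (x : 'I_l)
  (W : {set 'I_n}) : 'I_l :=
  odflt x [pick y : 'I_l | chi_opt S x W y &&
             [forall z : 'I_l, (z < y) ==> ~~ chi_opt S x W z]].

Definition chi (n l : nat) (S : 'I_l -> {set 'I_n}) (x : 'I_l)
  (W : {set 'I_n}) : {set 'I_n} := S (chi_idx S x W) :\: W.

Definition expected_chi (n l : nat) (S : 'I_l -> {set 'I_n}) (s : nat) : R :=
  (INR (\sum_(x : 'I_l) \sum_(W : {set 'I_n} | #|W| == s) #|chi S x W|)
   / (INR l * INR 'C(n, s)))%R.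

(* One round: for a [p]-random [W], replace [S x] by the smallest set [S y :\: W] with
   [S y \subset S x :|: W].  The pair [(x, W)] can be recovered from [W :|: T], [T] and [x],
   where [T] is this residue: [S y] is then a smallest member of the family inside [W :|: T],
   and [x] is one of the few indices whose set contains [T], few by spreadness.  Comparing the
   probability of [(x, W)] with that of its code by Gibbs' inequality gives
   [E |T| <= E |S x| / 3] as soon as [p r >= 16].  Residues of residues are again residues of
   the original family, so [m] rounds with [p = 16 / r] shrink [E |chi|] by [3^-m] for a
   [W] of density at most [16 m / r].  Such a [W] has size at most [s] with probability
   [>= 1/2], and [|chi(x, W)|] only decreases as [W] grows, so uniform [s]-sets do at most
   twice as badly. *)

From mathcomp Require Import all_boot.
From Stdlib Require Import Reals ZArith Lia Lra.
From mathcomp Require Import all_order all_algebra Rstruct ring.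

Set Implicit Arguments. Unset Strict Implicit. Unset Printing Implicit Defensive.
Import Order.TTheory GRing.Theory Num.Theory.

Bind Scope ring_scope with R.

Section BiasedMeasure.
Local Open Scope ring_scope.
Variable n : nat.
Implicit Types (A B C T U W : {set 'I_n}) (p q : R).

Lemma sum_set_prod (f : 'I_n -> bool -> R) :
  \sum_(A : {set 'I_n}) \prod_(i < n) f i (i \in A) = \prod_(i < n) (f i true + f i false).
Proof.
rewrite (eq_bigr (fun i => \sum_(b : bool) f i b)); last by move=> i _; rewrite big_bool.
rewrite bigA_distr_bigA /=.
rewrite (reindex (fun g : {ffun 'I_n -> bool} => [set i | g i])) /=; last first.
  exists (fun A : {set 'I_n} => [ffun i => i \in A]) => g _.
    by apply/ffunP => i; rewrite ffunE inE.
  by apply/setP => i; rewrite !inE ffunE.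
by apply: eq_bigr => g _; apply: eq_bigr => i _; rewrite inE.
Qed.

Lemma prod_mem_cond C T (a b : R) :
  \prod_(i in C) (if i \in T then a else b) = a ^+ #|C :&: T| * b ^+ #|C :\: T|.
Proof.
rewrite (bigID (mem T)) /=; congr (_ * _).
  rewrite (eq_bigr (fun _ => a)); last by move=> i /andP[_ ->].
  by rewrite -prodr_const; apply: eq_bigl => i; rewrite !inE.
rewrite (eq_bigr (fun _ => b)); last by move=> i /andP[_ /negbTE ->].
by rewrite -prodr_const; apply: eq_bigl => i; rewrite !inE andbC.
Qed.

Definition pmeasure p A : R := \prod_(i < n) (if i \in A then p else 1 - p).

Lemma pmeasureE p A : pmeasure p A = p ^+ #|A| * (1 - p) ^+ (n - #|A|).
Proof.
rewrite /pmeasure (eq_bigl (fun i => i \in [set: 'I_n])); last by move=> i; rewrite inE.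
rewrite prod_mem_cond setTI; congr (_ * _); congr (_ ^+ _).
by rewrite setTD cardsCs setCK card_ord.
Qed.

Lemma pmeasure_ge0 p A : 0 <= p -> p <= 1 -> 0 <= pmeasure p A.
Proof.
move=> p0 p1; apply: prodr_ge0 => i _.
by case: (i \in A) => //; rewrite subr_ge0.
Qed.

Lemma sum_pmeasure p : \sum_(A : {set 'I_n}) pmeasure p A = 1.
Proof.
rewrite /pmeasure (sum_set_prod (fun i b => if b then p else 1 - p)).
by rewrite big1 // => i _; rewrite addrC subrK.
Qed.

Lemma pmeasure0 U : pmeasure 0 U = (U == set0)%:R.
Proof.
rewrite /pmeasure; have [->|/set0Pn[i Ui]] := eqVneq U set0.
  by rewrite big1 // => i _; rewrite inE subr0.
by rewrite (bigD1 i) //= Ui mul0r.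
Qed.

Lemma pmeasureU_ge p W T : 0 <= p -> p <= 1 -> [disjoint W & T] ->
  p ^+ #|T| * pmeasure p W <= pmeasure p (W :|: T).
Proof.
move=> p0 p1 WT; rewrite !pmeasureE cardsU (disjoint_setI0 WT) cards0 subn0.
rewrite mulrA -exprD addnC; apply: ler_wpM2l; first exact: exprn_ge0.
apply: ler_wiXn2l; first by rewrite subr_ge0.
  by rewrite lerBlDr lerDl.
by rewrite subnDA leq_subr.
Qed.

Lemma eq_set_prod A B :
  ((A == B)%:R : R) = \prod_(i < n) (((i \in A) == (i \in B))%:R : R).
Proof.
have [->|AB] := eqVneq A B; first by rewrite big1 // => i _; rewrite eqxx.
have [i Ai] : exists i, (i \in A) != (i \in B).
  apply/existsP; apply: contraNT AB => /existsPn AB.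
  by apply/eqP/setP => i; apply/eqP; move/negPn: (AB i).
by rewrite (bigD1 i) //= (negbTE Ai) mul0r.
Qed.

Lemma sum_pmeasure_setU_eq p q U :
  \sum_(W1 : {set 'I_n}) \sum_(W2 : {set 'I_n})
    (W1 :|: W2 == U)%:R * pmeasure p W1 * pmeasure q W2 =
  pmeasure (p + q - p * q) U.
Proof.
pose h i (b1 b2 : bool) : R := (if b1 then p else 1 - p) *
  (if b2 then q else 1 - q) * ((b1 || b2) == (i \in U))%:R.
transitivity (\sum_(W1 : {set 'I_n}) \sum_(W2 : {set 'I_n})
  \prod_(i < n) h i (i \in W1) (i \in W2)).
  apply: eq_bigr => W1 _; apply: eq_bigr => W2 _.
  rewrite eq_set_prod /pmeasure /h -!big_split /=.
  by apply: eq_bigr => i _; rewrite in_setU; ring.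
rewrite (eq_bigr (fun W1 : {set 'I_n} =>
  \prod_(i < n) (h i (i \in W1) true + h i (i \in W1) false)));
  last by move=> W1 _; exact: (sum_set_prod (h^~ _)).
rewrite (sum_set_prod (fun i b1 => h i b1 true + h i b1 false)).
by apply: eq_bigr => i _; rewrite /h; case: (i \in U) => /=; ring.
Qed.

Lemma sum_pmeasure_setU p q (g : {set 'I_n} -> R) :
  \sum_(W1 : {set 'I_n}) \sum_(W2 : {set 'I_n}) pmeasure p W1 * pmeasure q W2 * g (W1 :|: W2) =
  \sum_(U : {set 'I_n}) pmeasure (p + q - p * q) U * g U.
Proof.
transitivity (\sum_(W1 : {set 'I_n}) \sum_(W2 : {set 'I_n}) \sum_(U : {set 'I_n})
    (W1 :|: W2 == U)%:R * pmeasure p W1 * pmeasure q W2 * g U).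
  apply: eq_bigr => W1 _; apply: eq_bigr => W2 _.
  rewrite (bigD1 (W1 :|: W2)) //= eqxx mul1r big1 ?addr0 // => U.
  by rewrite eq_sym => /negbTE ->; rewrite !mul0r.
under eq_bigr do rewrite exchange_big; rewrite exchange_big.
apply: eq_bigr => U _; rewrite -sum_pmeasure_setU_eq mulr_suml.
by apply: eq_bigr => W1 _; rewrite mulr_suml.
Qed.

Lemma sum_pmeasure_card p : \sum_(A : {set 'I_n}) pmeasure p A * #|A|%:R = n%:R * p.
Proof.
transitivity (\sum_(A : {set 'I_n}) \sum_(j < n) pmeasure p A * (j \in A)%:R).
  apply: eq_bigr => A _; rewrite -mulr_sumr; congr (_ * _).
  rewrite -sum1_card natr_sum big_mkcond /=.
  by apply: eq_bigr => j _; case: (j \in A).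
rewrite exchange_big /=.
rewrite (eq_bigr (fun=> p)) ?sumr_const ?card_ord ?mulr_natl // => j _.
pose f i (b : bool) : R := (if b then p else 1 - p) * (if i == j then b%:R else 1).
rewrite (eq_bigr (fun A : {set 'I_n} => \prod_(i < n) f i (i \in A))); last first.
  move=> A _; rewrite /f big_split /=; congr (_ * _).
  by rewrite (bigD1 j) //= eqxx big1 ?mulr1 // => i /negbTE ->.
rewrite sum_set_prod (bigD1 j) //= /f eqxx big1 ?mulr1 ?mulr0 ?addr0 //.
by move=> i /negbTE ->; rewrite !mulr1 addrC subrK.
Qed.

End BiasedMeasure.

Section CardinalityAverage.
Local Open Scope ring_scope.
Variable n : nat.
Implicit Types (g : {set 'I_n} -> R) (p : R).

Definition set_antitone g := forall A B : {set 'I_n}, A \subset B -> g B <= g A.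

Definition avg_card g s := (\sum_(A : {set 'I_n} | #|A| == s) g A) / 'C(n, s)%:R.

Lemma card_sets_of_card s : #|[pred A : {set 'I_n} | #|A| == s]| = 'C(n, s).
Proof.
by rewrite -[in RHS](card_ord n) -card_draws; apply: eq_card => A; rewrite !inE.
Qed.

Lemma binomial_gt0R s : (s <= n)%nat -> 0 < 'C(n, s)%:R :> R.
Proof. by move=> sn; rewrite ltr0n bin_gt0. Qed.

(* Double counting of the pairs [(A, a)] with [a \in A], [#|A| = s.+1]: each gives [B = A :\ a]. *)
Lemma sum_card_succ_le g s : set_antitone g ->
  s.+1%:R * \sum_(A : {set 'I_n} | #|A| == s.+1) g A <=
  (n - s)%:R * \sum_(B : {set 'I_n} | #|B| == s) g B.
Proof.
move=> g_anti.
pose pairs (h : {set 'I_n} -> 'I_n -> R) :=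
  \sum_(A : {set 'I_n}) \sum_(a < n) (if (#|A| == s.+1) && (a \in A) then h A a else 0).
have -> : s.+1%:R * \sum_(A : {set 'I_n} | #|A| == s.+1) g A = pairs (fun A _ => g A).
  rewrite mulr_sumr big_mkcond /=; apply: eq_bigr => A _.
  have [<-|] /= := eqVneq; last by rewrite big1.
  by rewrite -big_mkcond /= sumr_const mulr_natl.
apply: (@le_trans _ _ (pairs (fun A a => g (A :\ a)))).
  apply: ler_sum => A _; apply: ler_sum => a _.
  by case: ifP => // _; apply: g_anti; exact: subsetDl.
have shift a : \sum_(A : {set 'I_n}) (if (#|A| == s.+1) && (a \in A) then g (A :\ a) else 0) =
               \sum_(B : {set 'I_n}) (if (#|B| == s) && (a \notin B) then g B else 0).
  rewrite -big_mkcond -[RHS]big_mkcond /=.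
  rewrite (reindex_onto (fun B => a |: B) (fun A => A :\ a)) /=; last first.
    by move=> A /andP[_ aA]; rewrite setD1K.
  apply: eq_big => [B|B /andP[_ /eqP ->] //].
  rewrite setU11 andbT cardsU1; case aB: (a \in B) => /=.
    rewrite andbF; apply/negbTE/negP => /andP[_ /eqP eB].
    by move: aB; rewrite -eB setD11.
  by rewrite setU1K ?aB // eqxx andbT add1n eqSS.
rewrite /pairs exchange_big /=; under eq_bigr do rewrite shift.
rewrite exchange_big /= mulr_sumr [X in _ <= X]big_mkcond /=; apply: ler_sum => B _.
have [<-|] /= := eqVneq; last by rewrite big1.
rewrite -big_mkcond /= sumr_const.
have -> : #|[pred a : 'I_n | a \notin B]| = #|~: B| by apply: eq_card => a; rewrite !inE.
by rewrite cardsCs setCK card_ord mulr_natl.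
Qed.

Lemma avg_card_succ_le g s : set_antitone g -> (s < n)%nat -> avg_card g s.+1 <= avg_card g s.
Proof.
move=> g_anti sn; rewrite /avg_card.
have := sum_card_succ_le s g_anti.
set S1 := \sum_(A | _) _; set S0 := \sum_(A | _) _ => S10.
have C0 := binomial_gt0R (ltnW sn); have C1 := binomial_gt0R sn.
have binS : s.+1%:R * 'C(n, s.+1)%:R = (n - s)%:R * 'C(n, s)%:R :> R.
  by rewrite -!natrM mul_bin_left.
rewrite ler_pdivrMr // mulrAC ler_pdivlMr // -(@ler_pM2l _ s.+1%:R) ?ltr0n //.
have -> : s.+1%:R * (S0 * 'C(n, s.+1)%:R) = (n - s)%:R * S0 * 'C(n, s)%:R.
  by rewrite mulrCA binS; ring.
by rewrite mulrA; apply: ler_wpM2r S10; apply: ltW.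
Qed.

Lemma avg_card_le g s t : set_antitone g -> (s <= t)%nat -> (t <= n)%nat ->
  avg_card g t <= avg_card g s.
Proof.
move=> g_anti st tn; elim: t st tn => [|t IH] st tn.
  by move: st; rewrite leqn0 => /eqP ->.
case: (ltngtP s t.+1) st => // [lt_st|->] _ //.
exact: le_trans (avg_card_succ_le g_anti tn) (IH lt_st (ltnW tn)).
Qed.

Lemma avg_card_le_const g c s : (s <= n)%nat -> (forall A, g A <= c) -> avg_card g s <= c.
Proof.
move=> sn gc; rewrite /avg_card ler_pdivrMr ?binomial_gt0R //.
apply: le_trans (_ : \sum_(A : {set 'I_n} | #|A| == s) c <= _); first exact: ler_sum.
by rewrite sumr_const card_sets_of_card mulr_natr.
Qed.

Lemma sum_card_le_partition (f : {set 'I_n} -> R) s :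
  \sum_(U : {set 'I_n} | (#|U| <= s)%nat) f U =
  \sum_(j < s.+1) \sum_(U : {set 'I_n} | #|U| == j) f U.
Proof.
under [RHS]eq_bigr do rewrite big_mkcond.
rewrite exchange_big /= big_mkcond /=; apply: eq_bigr => U _.
case: ifP => Us.
  rewrite (bigD1 (Ordinal (Us : #|U| < s.+1)%nat)) //= eqxx big1 ?addr0 // => j Ssj.
  case: eqP => // Uj; move: Ssj; apply: contraNeq => _; apply/eqP/val_inj.
  by rewrite /= Uj.
rewrite big1 // => j _; case: eqP => // Uj.
by move: Us; rewrite Uj -ltnS ltn_ord.
Qed.

(* Conditioned on its size, a [p]-random set is uniform. *)
Lemma avg_card_le_sum_pmeasure p g s : 0 <= p -> p <= 1 -> set_antitone g ->
  (forall A, 0 <= g A) -> (s <= n)%nat ->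
  (\sum_(U : {set 'I_n} | (#|U| <= s)%nat) pmeasure p U) * avg_card g s <=
  \sum_(U : {set 'I_n}) pmeasure p U * g U.
Proof.
move=> p0 p1 g_anti g0 sn.
apply: (@le_trans _ _ (\sum_(U : {set 'I_n} | (#|U| <= s)%nat) pmeasure p U * g U)); last first.
  rewrite [X in X <= _]big_mkcond /=; apply: ler_sum => U _.
  by case: ifP => // _; apply: mulr_ge0 => //; apply: pmeasure_ge0.
rewrite sum_card_le_partition mulr_suml sum_card_le_partition; apply: ler_sum => j _.
have js : (j <= s)%nat by rewrite -ltnS ltn_ord.
set c := p ^+ j * (1 - p) ^+ (n - j).
have c0 : 0 <= c by apply: mulr_ge0; apply: exprn_ge0; rewrite ?subr_ge0.
have pmeasure_j (U : {set 'I_n}) : #|U| == j -> pmeasure p U = c.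
  by move/eqP=> Uj; rewrite pmeasureE Uj.
clearbody c; rewrite (eq_bigr _ pmeasure_j) [X in _ <= X](eq_bigr (fun U => c * g U)); last first.
  by move=> U /pmeasure_j ->.
rewrite -mulr_sumr sumr_const card_sets_of_card -mulr_natr -mulrA; apply: ler_wpM2l => //.
rewrite mulrC -ler_pdivlMr ?binomial_gt0R ?(leq_trans js) //.
exact: avg_card_le.
Qed.

Lemma sum_pmeasure_card_le p s : 0 <= p -> p <= 1 ->
  1 - n%:R * p / s.+1%:R <= \sum_(U : {set 'I_n} | (#|U| <= s)%nat) pmeasure p U.
Proof.
move=> p0 p1; have s1 : 0 < s.+1%:R :> R by rewrite ltr0n.
have := sum_pmeasure n p; rewrite (bigID (fun U : {set 'I_n} => (#|U| <= s)%nat)) /=.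
set small := \sum_(U | _) _; set large := \sum_(U | _) _ => sum1.
suff : large <= n%:R * p / s.+1%:R by rewrite lerBlDr -sum1 lerD2l.
rewrite -sum_pmeasure_card ler_pdivlMr // mulr_suml.
rewrite [X in _ <= X](bigID (fun U : {set 'I_n} => (#|U| <= s)%nat)) /= addrC.
apply: ler_wpDr.
  by apply: sumr_ge0 => U _; apply: mulr_ge0; rewrite ?pmeasure_ge0.
apply: ler_sum => U; rewrite -ltnNge => Us; apply: ler_wpM2l; first exact: pmeasure_ge0.
by rewrite ler_nat.
Qed.

Lemma half_le_sum_pmeasure_card_le p s : 0 <= p -> p <= 1 -> 2%:R * (n%:R * p) <= s%:R ->
  2%:R^-1 <= \sum_(U : {set 'I_n} | (#|U| <= s)%nat) pmeasure p U.
Proof.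
move=> p0 p1 nps; apply: le_trans (sum_pmeasure_card_le s p0 p1).
have -> : 2%:R^-1 = 1 - 2%:R^-1 :> R by field.
apply: lerB => //; rewrite ler_pdivrMr ?ltr0n // -(@ler_pM2l _ 2%:R) ?ltr0n //.
have -> : 2%:R * (2%:R^-1 * s.+1%:R) = s.+1%:R :> R by field.
by rewrite (le_trans nps) // ler_nat.
Qed.

Lemma avg_card_le_twice_sum_pmeasure p g s : 0 <= p -> p <= 1 -> 2%:R * (n%:R * p) <= s%:R ->
  set_antitone g -> (forall A, 0 <= g A) -> (s <= n)%nat ->
  avg_card g s <= 2%:R * \sum_(U : {set 'I_n}) pmeasure p U * g U.
Proof.
move=> p0 p1 nps g_anti g0 sn.
have avg0 : 0 <= avg_card g s by rewrite divr_ge0 ?sumr_ge0.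
rewrite -ler_pdivrMl ?ltr0n //; apply: le_trans (avg_card_le_sum_pmeasure p0 p1 g_anti g0 sn).
by rewrite ler_wpM2r // half_le_sum_pmeasure_card_le.
Qed.

End CardinalityAverage.

Section Logarithm.
Local Open Scope ring_scope.

Lemma ln_le_subr1 (x : R) : 0 < x -> ln x <= x - 1.
Proof.
move=> x0; have := exp_ineq1_le (ln x); rewrite exp_ln; last exact/RltP.
by move/RleP; rewrite RplusE lerBrDr addrC.
Qed.

Lemma lnM (x y : R) : 0 < x -> 0 < y -> ln (x * y) = ln x + ln y.
Proof. by move=> /RltP x0 /RltP y0; rewrite -RmultE ln_mult. Qed.

Lemma lnX (x : R) k : 0 < x -> ln (x ^+ k) = k%:R * ln x.
Proof. by move=> /RltP x0; rewrite -RpowE ln_pow // INRE. Qed.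

Lemma lnV (x : R) : 0 < x -> ln x^-1 = - ln x.
Proof. by move=> /RltP x0; rewrite -RinvE ln_Rinv. Qed.

Lemma ln_ler (x y : R) : 0 < x -> x <= y -> ln x <= ln y.
Proof.
move=> x0; rewrite le_eqVlt => /predU1P[-> //|/RltP xy].
by apply/ltW/RltP; apply: ln_increasing => //; exact/RltP.
Qed.

Lemma ln2_gt0 : 0 < ln 2%:R :> R.
Proof.
apply/RltP; have -> : 0 = ln 1 by rewrite ln_1.
by apply: ln_increasing; apply/RltP; rewrite ?ltr01 ?ltr1n.
Qed.

Lemma sum_ln_le0 (I : finType) (P K : I -> R) :
  (forall i, 0 <= P i) -> (forall i, 0 < K i) ->
  \sum_i P i = 1 -> \sum_i P i * K i <= 1 -> \sum_i P i * ln (K i) <= 0.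
Proof.
move=> P0 K0 P1 PK1.
apply: (@le_trans _ _ (\sum_i (P i * K i - P i))).
  apply: ler_sum => i _; rewrite -[X in _ <= _ - X]mulr1 -mulrBr.
  by apply: ler_wpM2l => //; apply: ln_le_subr1.
by rewrite sumrB P1 subr_le0.
Qed.

End Logarithm.

Section Encoding.
Local Open Scope ring_scope.
Variables (n l : nat) (F : 'I_l -> {set 'I_n}).
Implicit Types (W Z T : {set 'I_n}) (x y z : 'I_l) (p lam r : R).

Definition admissible W x z := (#|F z| <= #|F x|)%nat && (F z \subset F x :|: W).

Lemma admissible_refl W x : admissible W x x.
Proof. by rewrite /admissible leqnn subsetUl. Qed.

Definition improve W x : 'I_l := arg_min x (admissible W x) (fun z => #|F z :\: W|).

Definition residue W x : {set 'I_n} := F (improve W x) :\: W.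

Lemma improveP W x : admissible W x (improve W x) /\
  forall z, admissible W x z -> (#|residue W x| <= #|F z :\: W|)%nat.
Proof. by rewrite /residue /improve; case: arg_minnP; first exact: admissible_refl. Qed.

Lemma residue_sub W x : residue W x \subset F x.
Proof.
have [/andP[_ /subsetP sub] _] := improveP W x.
apply/subsetP => e; rewrite inE => /andP[eW /sub].
by rewrite inE (negbTE eW) orbF.
Qed.

Lemma residue_disjoint W x : [disjoint W & residue W x].
Proof. by rewrite /residue -setI_eq0 setDE setICA setICr setI0. Qed.

Definition decode Z : option 'I_l :=
  if [pick z | F z \subset Z] is Some z0
  then Some (arg_min z0 (fun z => F z \subset Z) (fun z => #|F z|)) else None.

Lemma decodeP Z y : F y \subset Z -> exists z, [/\ decode Z = Some z, F z \subset Z &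
  forall z', F z' \subset Z -> (#|F z| <= #|F z'|)%nat].
Proof.
move=> yZ; rewrite /decode; case: pickP => [z0 z0Z|/(_ y)]; last by rewrite yZ.
by case: arg_minnP => // z zZ zmin; exists z.
Qed.

Definition covers T : nat := #|[set x | T \subset F x]|.

(* The probability of drawing [Z] as a [p]-random set, then [T] as a [lam]-random subset of
   [F z] for [z = decode Z], then [x] uniformly among the indices with [T \subset F x]. *)
Definition code_weight p lam Z T x : R :=
  if decode Z is Some z then
    if (T \subset F z) && (T \subset F x)
    then pmeasure p Z * lam ^+ #|T| * (1 - lam) ^+ (#|F z| - #|T|) / (covers T)%:R
    else 0
  else 0.

Lemma code_weight_ge0 p lam Z T x : 0 <= p -> p <= 1 -> 0 <= lam -> lam <= 1 ->
  0 <= code_weight p lam Z T x.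
Proof.
move=> p0 p1 lam0 lam1; rewrite /code_weight; case: (decode Z) => // z.
case: ifP => // _; apply: divr_ge0 => //.
by rewrite !mulr_ge0 ?pmeasure_ge0 ?exprn_ge0 ?subr_ge0.
Qed.

Lemma sum_subset_weight (C : {set 'I_n}) lam :
  \sum_(T : {set 'I_n}) (if T \subset C then lam ^+ #|T| * (1 - lam) ^+ (#|C| - #|T|) else 0) = 1.
Proof.
pose f i (b : bool) : R := if i \in C then (if b then lam else 1 - lam) else (~~ b)%:R.
rewrite (eq_bigr (fun T : {set 'I_n} => \prod_(i < n) f i (i \in T))); last first.
  move=> T _; rewrite (bigID (mem C)) /=; case: ifP => TC.
    rewrite [X in _ = _ * X]big1 ?mulr1; last first.
      move=> i iC; rewrite /f (negbTE iC).
      by case: (boolP (i \in T)) => // /(subsetP TC); rewrite (negbTE iC).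
    rewrite (eq_bigr (fun i => if i \in T then lam else 1 - lam)); last first.
      by move=> i iC; rewrite /f iC.
    by rewrite prod_mem_cond (setIidPr TC) cardsD (setIidPr TC).
  have /subsetPn[i iT iC] := negbT TC.
  by rewrite [X in _ = _ * X](bigD1 i iC) /= /f (negbTE iC) iT mul0r mulr0.
rewrite sum_set_prod big1 // => i _; rewrite /f; case: (i \in C) => /=.
  by rewrite addrC subrK.
by rewrite add0r.
Qed.

Lemma sum_covers_le1 T :
  \sum_x (if T \subset F x then 1 else 0) / (covers T)%:R <= 1 :> R.
Proof.
rewrite -mulr_suml -big_mkcond /= sumr_const.
have -> : #|[pred x | T \subset F x]| = covers T by apply: eq_card => x; rewrite !inE.
have [->|cT] := posnP (covers T); first by rewrite mulr0n mul0r.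
by rewrite -mulr_natl mulr1 mulfV // pnatr_eq0 -lt0n.
Qed.

Lemma sum_code_weight_le1 p lam : 0 <= p -> p <= 1 -> 0 <= lam -> lam <= 1 ->
  \sum_(Z : {set 'I_n}) \sum_(T : {set 'I_n}) \sum_x code_weight p lam Z T x <= 1.
Proof.
move=> p0 p1 lam0 lam1; rewrite -(sum_pmeasure n p); apply: ler_sum => Z _.
rewrite /code_weight; case: (decode Z) => [z|]; last first.
  by rewrite big1 ?pmeasure_ge0 // => T _; rewrite big1.
apply: (@le_trans _ _ (\sum_(T : {set 'I_n}) pmeasure p Z *
  (if T \subset F z then lam ^+ #|T| * (1 - lam) ^+ (#|F z| - #|T|) else 0))); last first.
  by rewrite -mulr_sumr sum_subset_weight mulr1.
apply: ler_sum => T _; case: ifP => Tz; last by rewrite big1 ?mulr0 // => x _; rewrite andFb.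
rewrite mulrA; set c := pmeasure p Z * lam ^+ #|T| * (1 - lam) ^+ (#|F z| - #|T|).
have c0 : 0 <= c by rewrite !mulr_ge0 ?pmeasure_ge0 ?exprn_ge0 ?subr_ge0.
rewrite -[X in _ <= X]mulr1; apply: le_trans (ler_wpM2l c0 (sum_covers_le1 T)).
rewrite mulr_sumr.
by apply: ler_sum => x _; rewrite /=; case: ifP; rewrite ?mul0r ?mulr0 ?mul1r.
Qed.

Lemma decode_residue W x : exists z,
  [/\ decode (W :|: residue W x) = Some z, residue W x \subset F z & (#|F z| <= #|F x|)%nat].
Proof.
have [/andP[yx yWx] ymin] := improveP W x.
set T := residue W x in ymin *; set y := improve W x in yx yWx.
have yZ : F y \subset W :|: T.
  by apply/subsetP => e ey; rewrite /T /residue -/y !inE ey andbT orbN.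
have [z [Dz zZ zmin]] := decodeP yZ; exists z; split => //; last first.
  exact: leq_trans (zmin _ yZ) yx.
have zadm : admissible W x z.
  rewrite /admissible (leq_trans (zmin _ yZ) yx) /=; apply: (subset_trans zZ).
  by rewrite setUC; apply: setSU; exact: residue_sub.
have zT : F z :\: W \subset T.
  apply/subsetP => e; rewrite inE => /andP[eW /(subsetP zZ)].
  by rewrite inE (negbTE eW).
have -> : T = F z :\: W by apply/esym/eqP; rewrite eqEcard zT ymin.
exact: subsetDl.
Qed.

Lemma code_weight_residue_ge p lam r W x :
  0 < p -> p <= 1 -> 0 < lam -> lam <= 1 -> 0 < r ->
  (forall T, (covers T)%:R * r ^+ #|T| <= l%:R) ->
  pmeasure p W / l%:R * ((p * lam * r) ^+ #|residue W x| * (1 - lam) ^+ #|F x|) <=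
  code_weight p lam (W :|: residue W x) (residue W x) x.
Proof.
move=> p0 p1 lam0 lam1 r0 spread_r.
have [z [Dz Tz zx]] := decode_residue W x.
rewrite /code_weight Dz Tz residue_sub /=.
set T := residue W x; set t := #|T|.
have cT : 0 < (covers T)%:R :> R.
  by rewrite ltr0n /covers card_gt0; apply/set0Pn; exists x; rewrite inE residue_sub.
have l0 : 0 < l%:R :> R.
  by apply: lt_le_trans (spread_r T); rewrite mulr_gt0 // exprn_gt0.
have spread_T : r ^+ t / l%:R <= (covers T)%:R^-1.
  by rewrite ler_pdivrMr // mulrC ler_pdivlMr // mulrC spread_r.
have lam'_ler : (1 - lam) ^+ #|F x| <= (1 - lam) ^+ (#|F z| - t).
  apply: ler_wiXn2l; [by rewrite subr_ge0 | by rewrite lerBlDr lerDl ltW |].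
  exact: leq_trans (leq_subr _ _) zx.
have -> : pmeasure p W / l%:R * ((p * lam * r) ^+ t * (1 - lam) ^+ #|F x|) =
    p ^+ t * pmeasure p W * lam ^+ t * (1 - lam) ^+ #|F x| * (r ^+ t / l%:R).
  by rewrite !exprMn; ring.
have lam'0 : 0 <= 1 - lam by rewrite subr_ge0.
have p0' := ltW p0; have lam0' := ltW lam0; have r0' := ltW r0.
apply: ler_pM; [by rewrite !mulr_ge0 ?exprn_ge0 ?pmeasure_ge0 | | | exact: spread_T].
  by rewrite divr_ge0 ?exprn_ge0.
apply: ler_pM; [by rewrite !mulr_ge0 ?exprn_ge0 ?pmeasure_ge0 | | | exact: lam'_ler].
  exact: exprn_ge0.
apply: ler_wpM2r; first exact: exprn_ge0.
exact: pmeasureU_ge (residue_disjoint W x).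
Qed.

Lemma sum_code_weight_residue_le1 p lam : 0 <= p -> p <= 1 -> 0 <= lam -> lam <= 1 ->
  \sum_x \sum_(W : {set 'I_n}) code_weight p lam (W :|: residue W x) (residue W x) x <= 1.
Proof.
move=> p0 p1 lam0 lam1; apply: le_trans (sum_code_weight_le1 p0 p1 lam0 lam1).
pose code (xW : 'I_l * {set 'I_n}) := (xW.2 :|: residue xW.2 xW.1, (residue xW.2 xW.1, xW.1)).
pose weight (c : {set 'I_n} * ({set 'I_n} * 'I_l)) := code_weight p lam c.1 c.2.1 c.2.2.
have code_inj : injective code.
  move=> [x1 W1] [x2 W2] [/= WT12 T12 x12]; subst x2.
  have W_of W x : W = (W :|: residue W x) :\: residue W x.
    by rewrite setDUl setDv setU0; apply/esym/setDidPl; apply: residue_disjoint.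
  by rewrite (W_of W1 x1) (W_of W2 x1) WT12 T12.
rewrite pair_bigA /=; under [X in _ <= X]eq_bigr do rewrite pair_bigA /=.
rewrite pair_bigA /= -(big_imset weight (in2W code_inj)) /=.
rewrite [X in _ <= X](bigID (mem [set code xW | xW in xpredT])) /= lerDl.
by apply: sumr_ge0 => c _; apply: code_weight_ge0.
Qed.

Lemma sum_residue_ln_le p r : 0 < p -> p <= 1 -> 0 < r -> (0 < l)%nat ->
  (forall T, (covers T)%:R * r ^+ #|T| <= l%:R) ->
  ln (p * r / 2%:R) * \sum_x \sum_(W : {set 'I_n}) pmeasure p W * #|residue W x|%:R <=
  ln 2%:R * \sum_x #|F x|%:R.
Proof.
move=> p0 p1 r0 l0 spread_r.
have l0R : 0 < l%:R :> R by rewrite ltr0n.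
pose lam : R := 2%:R^-1.
have lam0 : 0 < lam by rewrite invr_gt0 ltr0n.
have lam1 : lam <= 1 by rewrite invf_le1 ?ler1n ?ltr0n.
have lam' : 1 - lam = lam by rewrite /lam; field.
have a0 : 0 < p * lam * r by rewrite !mulr_gt0.
pose P (xW : 'I_l * {set 'I_n}) := pmeasure p xW.2 / l%:R.
pose K (xW : 'I_l * {set 'I_n}) := (p * lam * r) ^+ #|residue xW.2 xW.1| * (1 - lam) ^+ #|F xW.1|.
have P0 xW : 0 <= P xW by apply: divr_ge0; [exact: pmeasure_ge0 (ltW p0) p1 | exact: ltW].
have K0 xW : 0 < K xW by rewrite mulr_gt0 ?exprn_gt0 ?lam'.
have P1 : \sum_xW P xW = 1.
  rewrite -(pair_bigA _ (fun x W => P (x, W))) /=.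
  under eq_bigr do rewrite -mulr_suml sum_pmeasure mul1r.
  by rewrite sumr_const card_ord -(mulr_natr l%:R^-1) mulVf ?gt_eqF.
have PK1 : \sum_xW P xW * K xW <= 1.
  apply: le_trans (sum_code_weight_residue_le1 (ltW p0) p1 (ltW lam0) lam1).
  rewrite -(pair_bigA _ (fun x W => P (x, W) * K (x, W))) /=.
  by apply: ler_sum => x _; apply: ler_sum => W _; apply: code_weight_residue_ge.
have := sum_ln_le0 P0 K0 P1 PK1.
rewrite -(pair_bigA _ (fun x W => P (x, W) * ln (K (x, W)))) /= => gibbs.
have -> : p * r / 2%:R = p * lam * r by rewrite /lam; ring.
set X := \sum_x \sum_(W : {set 'I_n}) pmeasure p W * _; set Y := \sum_x #|F x|%:R.
have expand : \sum_x \sum_(W : {set 'I_n}) P (x, W) * ln (K (x, W)) =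
    (ln (p * lam * r) * X - ln 2%:R * Y) / l%:R.
  rewrite mulrBl /X /Y !mulr_sumr !mulr_suml -sumrB; apply: eq_bigr => x _.
  have -> : ln 2%:R * #|F x|%:R / l%:R =
      \sum_(W : {set 'I_n}) pmeasure p W * (ln 2%:R * #|F x|%:R / l%:R).
    by rewrite -mulr_suml sum_pmeasure mul1r.
  rewrite mulr_sumr mulr_suml -sumrB.
  apply: eq_bigr => W _; rewrite /P /K /= lnM ?exprn_gt0 ?lam' // !lnX //.
  by rewrite /lam lnV ?ltr0n //; ring.
by move: gibbs; rewrite expand pmulr_lle0 ?invr_gt0 // subr_le0.
Qed.

Lemma sum_residue_le p r : 0 < p -> p <= 1 -> 16%:R <= p * r -> (0 < l)%nat ->
  (forall T, (covers T)%:R * r ^+ #|T| <= l%:R) ->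
  \sum_x \sum_(W : {set 'I_n}) pmeasure p W * #|residue W x|%:R <=
  3%:R^-1 * \sum_x #|F x|%:R.
Proof.
move=> p0 p1 pr16 l0 spread_r.
have r0 : 0 < r by rewrite -(pmulr_rgt0 _ p0) (lt_le_trans _ pr16) ?ltr0n.
have := sum_residue_ln_le p0 p1 r0 l0 spread_r.
set X := \sum_x _; set Y := \sum_x _ => lnXY.
have X0 : 0 <= X.
  apply: sumr_ge0 => x _; apply: sumr_ge0 => W _; apply: mulr_ge0 => //.
  exact: pmeasure_ge0 (ltW p0) p1.
have ln8 : 3%:R * ln 2%:R <= ln (p * r / 2%:R).
  rewrite -lnX ?ltr0n //; apply: ln_ler; first by rewrite exprn_gt0 ?ltr0n.
  by rewrite ler_pdivlMr ?ltr0n // -natrX -natrM.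
rewrite -(ler_pM2l ln2_gt0) -(@ler_pM2l _ 3%:R) ?ltr0n //.
have -> : 3%:R * (ln 2%:R * (3%:R^-1 * Y)) = ln 2%:R * Y by field.
by rewrite mulrA (le_trans _ lnXY) // ler_wpM2r.
Qed.

End Encoding.

Section Iteration.
Local Open Scope ring_scope.
Variables (n l : nat) (S : 'I_l -> {set 'I_n}).
Implicit Types (U W : {set 'I_n}) (x z : 'I_l) (F : 'I_l -> {set 'I_n}) (p r : R).

Lemma chi_idx_opt x W : chi_opt S x W (chi_idx S x W).
Proof.
have xadm : chi_adm S x W x by rewrite /chi_adm subsetUl.
case: (arg_minnP (fun z => #|S z :\: W|) xadm) => y0 y0adm y0min.
have y0opt : chi_opt S x W y0.
  by rewrite /chi_opt y0adm; apply/forallP => z; apply/implyP; apply: y0min.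
case: (arg_minnP (fun z : 'I_l => val z) y0opt) => y1 y1opt y1min.
rewrite /chi_idx; case: pickP => [y /andP[] //|/(_ y1)].
rewrite y1opt => /negbT/forallPn[z]; rewrite negb_imply negbK => /andP[zy1 zopt].
by have := y1min z zopt; rewrite leqNgt zy1.
Qed.

Lemma card_chi_le x W z : chi_adm S x W z -> (#|chi S x W| <= #|S z :\: W|)%nat.
Proof.
by move=> zadm; have /andP[_ /forallP/(_ z)] := chi_idx_opt x W; rewrite zadm.
Qed.

Lemma card_chi_le_card x W : (#|chi S x W| <= #|S x|)%nat.
Proof.
have xadm : chi_adm S x W x by rewrite /chi_adm subsetUl.
exact: leq_trans (card_chi_le xadm) (subset_leq_card (subsetDl _ _)).
Qed.

Lemma card_chi_antimono x W W' : W \subset W' -> (#|chi S x W'| <= #|chi S x W|)%nat.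
Proof.
move=> WW'; have /andP[yadm _] := chi_idx_opt x W.
apply: leq_trans (card_chi_le (subset_trans yadm (setUS _ WW'))) _.
exact/subset_leq_card/setDS.
Qed.

Definition reduced U0 F :=
  forall x, exists u, F x = S u :\: U0 /\ S u \subset S x :|: U0.

Lemma reduced_set0 : reduced set0 S.
Proof. by move=> x; exists x; rewrite setD0 setU0. Qed.

Lemma reduced_sub U0 F x : reduced U0 F -> F x \subset S x.
Proof.
case/(_ x) => u [-> /subsetP uxU0]; apply/subsetP => e; rewrite inE => /andP[eU0 /uxU0].
by rewrite inE (negbTE eU0) orbF.
Qed.

Lemma card_chi_le_reduced U0 F x : reduced U0 F -> (#|chi S x U0| <= #|F x|)%nat.
Proof. by case/(_ x) => u [-> ?]; apply: card_chi_le. Qed.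

Lemma reduced_residue U0 F W : reduced U0 F -> reduced (U0 :|: W) (residue F W).
Proof.
move=> redF x; have [/andP[_ /subsetP yxW] _] := improveP F W x.
set y := improve F W x in yxW *.
have [u [Fy uyU0]] := redF y; have [v [Fx /subsetP vxU0]] := redF x.
exists u; split; first by rewrite /residue -/y Fy setDDl.
apply/subsetP => e eu; rewrite !inE.
case eU0: (e \in U0); first by rewrite !orbT.
case eW: (e \in W); first by rewrite !orbT.
have /yxW : e \in F y by rewrite Fy inE eU0 eu.
by rewrite inE eW orbF Fx inE => /andP[_ /vxU0]; rewrite inE eU0 orbF => ->.
Qed.

Lemma covers_reduced_le U0 F T : reduced U0 F -> (covers F T <= covers S T)%nat.
Proof.
move=> redF; apply/subset_leq_card/subsetP => x; rewrite !inE => TF.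
exact: subset_trans TF (reduced_sub x redF).
Qed.

(* [union_prob p j] is the density of the union of [j] independent [p]-random sets. *)
Fixpoint union_prob p j : R := if j is j'.+1 then p + union_prob p j' - p * union_prob p j' else 0.

Lemma union_prob_bounds p j : 0 <= p -> p <= 1 ->
  [/\ 0 <= union_prob p j, union_prob p j <= 1 & union_prob p j <= j%:R * p].
Proof.
move=> p0 p1; elim: j => [|j [q0 q1 qj]] /=; first by rewrite mul0r lexx.
have -> : p + union_prob p j - p * union_prob p j = p + union_prob p j * (1 - p) by ring.
split.
- by rewrite addr_ge0 // mulr_ge0 // subr_ge0.
- by rewrite -lerBrDl ler_piMl // subr_ge0.
- rewrite -addn1 natrD mulrDl mul1r addrC lerD //.
  by apply: le_trans qj; rewrite ler_piMr // lerBlDr lerDl.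
Qed.

Definition total_chi V : R := \sum_x #|chi S x V|%:R.

Lemma total_chi_antimono : set_antitone total_chi.
Proof. by move=> A B AB; apply: ler_sum => x _; rewrite ler_nat card_chi_antimono. Qed.

Lemma sum_pmeasure_total_chi_le p r j U0 F : 0 < p -> p <= 1 -> 16%:R <= p * r ->
  (0 < l)%nat -> (forall T, (covers S T)%:R * r ^+ #|T| <= l%:R) -> reduced U0 F ->
  \sum_U pmeasure (union_prob p j) U * total_chi (U0 :|: U) <= 3%:R^-1 ^+ j * \sum_x #|F x|%:R.
Proof.
move=> p0 p1 pr16 l0 spread_r; elim: j U0 F => [|j IH] U0 F redF /=.
  rewrite (bigD1 set0) //= pmeasure0 eqxx mul1r big1 ?addr0; last first.
    by move=> U /negbTE Un0; rewrite pmeasure0 Un0 mul0r.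
  rewrite setU0 expr0 mul1r; apply: ler_sum => x _.
  by rewrite ler_nat card_chi_le_reduced.
have r0 : 0 < r by rewrite -(pmulr_rgt0 _ p0) (lt_le_trans _ pr16) ?ltr0n.
rewrite -(sum_pmeasure_setU p (union_prob p j) (fun U => total_chi (U0 :|: U))).
apply: (@le_trans _ _ (\sum_(W : {set 'I_n}) pmeasure p W *
  (3%:R^-1 ^+ j * \sum_x #|residue F W x|%:R))).
  apply: ler_sum => W _; under eq_bigr do rewrite -mulrA setUA.
  rewrite -mulr_sumr; apply: ler_wpM2l; first exact: pmeasure_ge0 (ltW p0) p1.
  exact: IH (reduced_residue W redF).
have spread_F T : (covers F T)%:R * r ^+ #|T| <= l%:R.
  apply: le_trans (spread_r T); apply: ler_wpM2r; first by rewrite exprn_ge0 // ltW.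
  by rewrite ler_nat (covers_reduced_le _ redF).
have -> : \sum_(W : {set 'I_n}) pmeasure p W * (3%:R^-1 ^+ j * \sum_x #|residue F W x|%:R) =
    3%:R^-1 ^+ j * \sum_x \sum_(W : {set 'I_n}) pmeasure p W * #|residue F W x|%:R.
  rewrite exchange_big !mulr_sumr; apply: eq_bigr => W _.
  by rewrite !mulr_sumr; apply: eq_bigr => x _; ring.
rewrite exprSr -mulrA ler_wpM2l ?exprn_ge0 ?invr_ge0 ?ler0n //.
exact: sum_residue_le p0 p1 pr16 l0 spread_F.
Qed.

End Iteration.

Section Conclusion.
Local Open Scope ring_scope.
Variables (n l k : nat) (S : 'I_l -> {set 'I_n}).
Hypothesis card_S : forall x, #|S x| = k.

Lemma total_chi_le V : total_chi S V <= l%:R * k%:R.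
Proof.
apply: (@le_trans _ _ (\sum_(x : 'I_l) k%:R)).
  by apply: ler_sum => x _; rewrite ler_nat -(card_S x) card_chi_le_card.
by rewrite sumr_const card_ord mulr_natl.
Qed.

(* With [p = 16 / r], [m] rounds give a set of density at most [16 m / r], hence of expected
   size at most [s / 2]. *)
Lemma avg_total_chi_le (r : R) m s : 16%:R < r -> (0 < l)%nat ->
  (forall T, (covers S T)%:R * r ^+ #|T| <= l%:R) ->
  32%:R * m%:R * n%:R <= s%:R * r -> (s <= n)%nat ->
  avg_card (total_chi S) s <= l%:R * k%:R * (2%:R / 3%:R) ^+ m.
Proof.
move=> r16 l0 spread_r mns sn.
have r0 : 0 < r by rewrite (lt_trans _ r16) ?ltr0n.
case: m mns => [|m] mns.
  by rewrite expr0 mulr1 avg_card_le_const // => V; apply: total_chi_le.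
pose p := 16%:R / r.
have p0 : 0 < p by rewrite divr_gt0 ?ltr0n.
have p1 : p <= 1 by rewrite ler_pdivrMr // mul1r ltW.
have pr16 : 16%:R <= p * r by rewrite divfK ?gt_eqF.
have [q0 q1 qm] := union_prob_bounds m.+1 (ltW p0) p1.
have small : 2%:R * (n%:R * union_prob p m.+1) <= s%:R.
  apply: le_trans (_ : 2%:R * (n%:R * (m.+1%:R * p)) <= _).
    by rewrite !ler_wpM2l ?ler0n.
  rewrite -(ler_pM2r r0); apply: le_trans mns.
  suff -> : 2%:R * (n%:R * (m.+1%:R * p)) * r = 32%:R * m.+1%:R * n%:R by [].
  by rewrite /p; field; rewrite gt_eqF.
apply: le_trans (avg_card_le_twice_sum_pmeasure q0 q1 small (total_chi_antimono S) _ sn) _.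
  by move=> V; apply: sumr_ge0.
have := sum_pmeasure_total_chi_le m.+1 p0 p1 pr16 l0 spread_r (reduced_set0 S).
under eq_bigr do rewrite set0U; under [X in _ <= _ * X]eq_bigr do rewrite card_S.
rewrite sumr_const card_ord -[k%:R *+ l]mulr_natl.
move=> /(ler_wpM2l (ler0n _ 2)) /le_trans; apply.
have -> : l%:R * k%:R * (2%:R / 3%:R) ^+ m.+1 =
    2%:R * (3%:R^-1 ^+ m.+1 * (l%:R * k%:R)) * 2%:R ^+ m :> R.
  by rewrite exprMn !exprS; field.
by rewrite ler_peMr ?exprn_ege1 ?ler1n // !mulr_ge0 ?exprn_ge0 ?invr_ge0 ?ler0n.
Qed.

End Conclusion.

Section ExpectedChi.
Local Open Scope ring_scope.

Lemma spread_covers n l k (r : R) (S : 'I_l -> {set 'I_n}) :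
  0 < r -> r ^+ k <= l%:R -> spread k r S ->
  forall T, (covers S T)%:R * r ^+ #|T| <= l%:R.
Proof.
move=> r0 rk spread_S T; have [->|T0] := eqVneq T set0.
  by rewrite cards0 expr0 mulr1 ler_nat (leq_trans (max_card _)) ?card_ord.
apply: le_trans rk; move/RleP: (spread_S T T0); rewrite INRE => cover_le.
have -> : r ^+ k = powerRZ r (Z.of_nat k - Z.of_nat #|T|) * r ^+ #|T|.
  rewrite -!RpowE !pow_powerRZ -RmultE -powerRZ_add; first by congr powerRZ; lia.
  by apply/eqP; rewrite gt_eqF.
by apply: ler_wpM2r; [rewrite exprn_ge0 // ltW | exact: cover_le].
Qed.

Lemma expected_chi_avg n l (S : 'I_l -> {set 'I_n}) s :
  expected_chi S s = avg_card (total_chi S) s / l%:R.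
Proof.
rewrite /expected_chi /avg_card /total_chi RdivE RmultE !INRE natr_sum.
under eq_bigr do rewrite natr_sum.
by rewrite exchange_big /= invfM; ring.
Qed.

Lemma expected_chi_le n l k (r : R) (S : 'I_l -> {set 'I_n}) m s :
  16%:R < r -> r ^+ k <= l%:R -> (forall x, #|S x| = k) -> spread k r S ->
  32%:R * m%:R * n%:R <= s%:R * r -> (s <= n)%nat ->
  expected_chi S s <= k%:R * (2%:R / 3%:R) ^+ m.
Proof.
move=> r16 rk card_S spread_S mns sn.
have r0 : 0 < r by rewrite (lt_trans _ r16) ?ltr0n.
have l0 : 0 < l%:R :> R by rewrite (lt_le_trans _ rk) ?exprn_gt0.
rewrite expected_chi_avg ler_pdivrMr // [_ * l%:R]mulrC mulrA.
by apply: (avg_total_chi_le card_S r16) (spread_covers r0 rk spread_S) mns sn; rewrite -(ltr0n R).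
Qed.

End ExpectedChi.

Bind Scope R_scope with R.
Delimit Scope R_scope with R.

Lemma log2_gt1 (x : R) : (2 < x)%R -> (1 < log2 x)%R.
Proof.
move=> x2; have ln2 : (0 < ln 2)%R by rewrite -ln_1; apply: ln_increasing; lra.
rewrite /log2 -(Rdiv_diag (ln 2)); last lra.
by apply: Rmult_lt_compat_r; [apply: Rinv_0_lt_compat | apply: ln_increasing; lra].
Qed.

Theorem mainTheorem4 :
  exists beta kappa : R, (1 < beta)%R /\ (1 < kappa)%R /\
  forall (n k : nat) (gamma eps : R),
    (1 <= k)%nat ->
    (0 < gamma < 1/2)%R -> (0 < eps < 1/2)%R ->
    forall (r : R), r = (beta * (1 / gamma) * log2 (INR k / eps))%R ->
    forall (l : nat), (INR l - 1 < r ^ k <= INR l)%R ->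
    forall (S : 'I_l -> {set 'I_n}),
      (forall i, #|S i| = k) ->
      spread k r S ->
      forall (m s : nat),
        (INR m <= r * gamma / kappa)%R ->
        (kappa * INR m * INR n / r <= INR s)%R ->
        (s <= n)%nat ->
        (expected_chi S s <= INR k * (2/3) ^ m)%R.
Proof.
exists 8%R, 32%R; split; [lra | split; [lra |]].
move=> n k gamma eps k1 gamma_bd eps_bd r r_def l [_ rk] S card_S spread_S m s _ mns sn.
have k1R : (1 <= INR k)%R by apply: (le_INR 1); apply/ssrnat.leP.
have r16 : (16 < r)%R.
  have gamma2 : (2 < 1 / gamma)%R.
    by apply: (Rmult_lt_reg_r gamma); [lra | rewrite /Rdiv Rmult_assoc Rinv_l; lra].
  have keps : (2 < INR k / eps)%R.
    by apply: (Rmult_lt_reg_r eps); [lra | rewrite /Rdiv Rmult_assoc Rinv_l; lra].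
  have := log2_gt1 keps; rewrite r_def; nra.
apply/RleP; rewrite RmultE RpowE RdivE !INRE.
apply: expected_chi_le card_S spread_S _ sn.
- by move/RltP: r16; rewrite IZRposE INRE.
- by move/RleP: rk; rewrite RpowE INRE.
- have r0 : (0 < r)%R by lra.
  by move/RleP: mns; rewrite RdivE !RmultE !INRE IZRposE INRE /= ler_pdivrMr //; exact/RltP.
Qed.
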